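(* Let $D$ be a weak bialgebra in $\mathcal C$ which is a weak crossed biproduct of a coalgebra $C$ and a weak Hopf algebra $B$ (playing the role of the algebra $A$), with preunit $\nu$, precounit $\upsilon$, associated idempotent $\nabla_{C\otimes B}$, coproduct $\delta_{C\otimes B}$ and morphism $\tau_B^C:C\otimes B\rightarrow B\otimes B$. Let $\beta_\nu=(C\otimes\mu_B)\circ(\nu\otimes B)$. If $\delta_{C\otimes B}\circ\beta_\nu=(\beta_\nu\otimes\beta_\nu)\circ\delta_B$, $\tau_B^C=(\varepsilon_C\otimes\delta_B)\circ\nabla_{C\otimes B}$ and $\upsilon=(\varepsilon_C\otimes\varepsilon_B)\circ\nabla_{C\otimes B}$, then there exist morphisms $f:B\rightarrow D$ and $g:D\rightarrow B$ such that $(D,B,f,g)$ is a weak bialgebra with a weak projection.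
   Context: $\mathcal C$ is a strict braided monoidal category with tensor product $\otimes$, unit object $K$ and braiding $c$, in which every idempotent splits. Algebras have unit $\eta$, product $\mu$; coalgebras counit $\varepsilon$, coproduct $\delta$; $f\wedge g=\mu\circ(f\otimes g)\circ\delta$. Weak bialgebra: algebra and coalgebra $D$ with $\delta_D\circ\mu_D=(\mu_D\otimes\mu_D)\circ(D\otimes c_{D,D}\otimes D)\circ(\delta_D\otimes\delta_D)$; $\varepsilon_D\circ\mu_D\circ(\mu_D\otimes D)=((\varepsilon_D\circ\mu_D)\otimes(\varepsilon_D\circ\mu_D))\circ(D\otimes\delta_D\otimes D)=((\varepsilon_D\circ\mu_D)\otimes(\varepsilon_D\circ\mu_D))\circ(D\otimes(c_{D,D}^{-1}\circ\delta_D)\otimes D)$; $(\delta_D\otimes D)\circ\delta_D\circ\eta_D=(D\otimes\mu_D\otimes D)\circ((\delta_D\circ\eta_D)\otimes(\delta_D\circ\eta_D))=(D\otimes(\mu_D\circ c_{D,D}^{-1})\otimes D)\circ((\delta_D\circ\eta_D)\otimes(\delta_D\circ\eta_D))$. Weak Hopf algebra: additionally an antipode $\lambda_D$ with $id_D\wedge\lambda_D=\Pi_D^L$, $\lambda_D\wedge id_D=\Pi_D^R$, $\lambda_D\wedge id_D\wedge\lambda_D=\lambda_D$, where $\Pi_D^L=((\varepsilon_D\circ\mu_D)\otimes D)\circ(D\otimes c_{D,D})\circ((\delta_D\circ\eta_D)\otimes D)$, $\Pi_D^R=(D\otimes(\varepsilon_D\circ\mu_D))\circ(c_{D,D}\otimes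 D)\circ(D\otimes(\delta_D\circ\eta_D))$. Weak projection $(D,B,f,g)$: $D$ weak bialgebra, $B$ weak Hopf algebra, $f:B\rightarrow D$ algebra and coalgebra morphism, $g:D\rightarrow B$ coalgebra morphism, $g\circ f=id_B$, $g\circ\mu_D\circ(D\otimes f)=\mu_B\circ(g\otimes B)$. Weak crossed product on $C\otimes A$ ($A$ algebra, $C$ object): given $\psi_A^C:A\otimes C\rightarrow C\otimes A$ with $(C\otimes\mu_A)\circ(\psi_A^C\otimes A)\circ(A\otimes\psi_A^C)=\psi_A^C\circ(\mu_A\otimes C)$, $\nabla_{C\otimes A}=(C\otimes\mu_A)\circ((\psi_A^C\circ(\eta_A\otimes C))\otimes A)$ (idempotent, image $C\times A$, injection $i_{C\otimes A}$, projection $p_{C\otimes A}$); $\sigma_A^C:C\otimes C\rightarrow C\otimes A$ with $\nabla_{C\otimes A}\circ\sigma_A^C=\sigma_A^C$; twisted condition $(C\otimes\mu_A)\circ(\sigma_A^C\otimes A)\circ(C\otimes\psi_A^C)\circ(\psi_A^C\otimes C)=(C\otimes\mu_A)\circ(\psi_A^C\otimes A)\circ(A\otimes\sigma_A^C)$; cocycle condition $(C\otimes\mu_A)\circ(\sigma_A^C\otimes A)\circ(C\otimes\sigma_A^C)=(C\otimes\mu_A)\circ(\sigma_A^C\otimes A)\circ(C\otimes\psi_A^C)\circ(\sigma_A^C\otimes C)$; product $\mu_{C\otimes A}=(C\otimes\mu_A)\circ(\sigma_A^C\otimes\mu_A)\circ(C\otimes\psi_A^C\otimes A)$. Preunit $\nu:K\rightarrow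 C\otimes A$, with $\beta_\nu=(C\otimes\mu_A)\circ(\nu\otimes A)$: $(C\otimes\mu_A)\circ(\sigma_A^C\otimes A)\circ(C\otimes\psi_A^C)\circ(\nu\otimes C)=\nabla_{C\otimes A}\circ(C\otimes\eta_A)$, $(C\otimes\mu_A)\circ(\sigma_A^C\otimes A)\circ(C\otimes\nu)=\nabla_{C\otimes A}\circ(C\otimes\eta_A)$, $(C\otimes\mu_A)\circ(\psi_A^C\otimes A)\circ(A\otimes\nu)=\beta_\nu$. Then $C\times A$ is an algebra with product $p_{C\otimes A}\circ\mu_{C\otimes A}\circ(i_{C\otimes A}\otimes i_{C\otimes A})$ and unit $p_{C\otimes A}\circ\nu$. Weak crossed coproduct on $C\otimes A$ ($C$ coalgebra, $A$ object): $\chi_A^C:C\otimes A\rightarrow A\otimes C$ with $(\chi_A^C\otimes C)\circ(C\otimes\chi_A^C)\circ(\delta_C\otimes A)=(A\otimes\delta_C)\circ\chi_A^C$; $\Gamma_{C\otimes A}=(C\otimes A\otimes\varepsilon_C)\circ(C\otimes\chi_A^C)\circ(\delta_C\otimes A)$ (idempotent); $\tau_A^C:C\otimes A\rightarrow A\otimes A$ with $\tau_A^C\circ\Gamma_{C\otimes A}=\tau_A^C$; twisted $(\tau_A^C\otimes C)\circ(C\otimes\chi_A^C)\circ(\delta_C\otimes A)=(A\otimes\chi_A^C)\circ(\chi_A^C\otimes A)\circ(C\otimes\tau_A^C)\circ(\delta_C\otimes A)$; cocycle $(\tau_A^C\otimes A)\circ(C\otimes\tau_A^C)\circ(\delta_C\otimes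 A)=(A\otimes\tau_A^C)\circ(\chi_A^C\otimes A)\circ(C\otimes\tau_A^C)\circ(\delta_C\otimes A)$; coproduct $\delta_{C\otimes A}=(C\otimes\chi_A^C\otimes A)\circ(\delta_C\otimes\tau_A^C)\circ(\delta_C\otimes A)$. Precounit $\upsilon:C\otimes A\rightarrow K$, with $\gamma_\upsilon=(C\otimes\upsilon)\circ(\delta_C\otimes A)$: $(A\otimes\upsilon)\circ(\chi_A^C\otimes A)\circ(C\otimes\tau_A^C)\circ(\delta_C\otimes A)=(\varepsilon_C\otimes A)\circ\Gamma_{C\otimes A}$, $(\upsilon\otimes A)\circ(C\otimes\tau_A^C)\circ(\delta_C\otimes A)=(\varepsilon_C\otimes A)\circ\Gamma_{C\otimes A}$, $(\upsilon\otimes C)\circ(C\otimes\chi_A^C)\circ(\delta_C\otimes A)=\gamma_\upsilon$. Then the image of $\Gamma_{C\otimes A}$ (injection $i$, projection $p$) is a coalgebra with coproduct $(p\otimes p)\circ\delta_{C\otimes A}\circ i$ and counit $\upsilon\circ i$. A weak bialgebra $D$ is a weak crossed biproduct of the coalgebra $C$ with the algebra $A$ (morphisms $\psi_A^C,\sigma_A^C,\chi_A^C,\tau_A^C$, preunit $\nu$, precounit $\upsilon$) if: $(C\otimes A,\mu_{C\otimes A})$ is a weak crossed product with preunit $\nu$; $(C\otimes A,\delta_{C\otimes A})$ is a weak crossed coproduct with precounit $\upsilon$; $\nabla_{C\otimes A}=\Gamma_{C\otimes A}$; there is an isomorphism of algebras and coalgebras $C\times A\rightarrow D$; and $(\varepsilon_C\otimes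 A)\circ\nu=\eta_A$, $\upsilon\circ(C\otimes\eta_A)=\varepsilon_C$. *)

(* A strict braided monoidal category in which every idempotent
   splits, presented in single-sorted form (one type of morphisms with source
   and target maps).  Strictness is then expressed by plain equalities of
   objects and of morphisms, with no transport along associators. *)
Set Implicit Arguments.
Unset Strict Implicit.

Record SBMCat := {
  Obj : Type;
  Mor : Type;
  src : Mor -> Obj;
  tgt : Mor -> Obj;
  idm : Obj -> Mor;
  comp : Mor -> Mor -> Mor;           (* comp g f = g o f *)
  tens : Obj -> Obj -> Obj;
  tensm : Mor -> Mor -> Mor;
  unitK : Obj;
  braid : Obj -> Obj -> Mor;
  braid_inv : Obj -> Obj -> Mor;
  src_idm : forall A, src (idm A) = A;
  tgt_idm : forall A, tgt (idm A) = A;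
  src_comp : forall f g, tgt f = src g -> src (comp g f) = src f;
  tgt_comp : forall f g, tgt f = src g -> tgt (comp g f) = tgt g;
  comp_id_r : forall f, comp f (idm (src f)) = f;
  comp_id_l : forall f, comp (idm (tgt f)) f = f;
  comp_assoc : forall f g h, tgt f = src g -> tgt g = src h ->
    comp h (comp g f) = comp (comp h g) f;
  src_tensm : forall f g, src (tensm f g) = tens (src f) (src g);
  tgt_tensm : forall f g, tgt (tensm f g) = tens (tgt f) (tgt g);
  tensm_idm : forall A B, tensm (idm A) (idm B) = idm (tens A B);
  tensm_comp : forall f f' g g', tgt f = src g -> tgt f' = src g' ->
    tensm (comp g f) (comp g' f') = comp (tensm g g') (tensm f f');
  tens_assoc : forall A B C, tens (tens A B) C = tens A (tens B C);
  tens_unit_l : forall A, tens unitK A = A;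
  tens_unit_r : forall A, tens A unitK = A;
  tensm_assoc : forall f g h, tensm (tensm f g) h = tensm f (tensm g h);
  tensm_unit_l : forall f, tensm (idm unitK) f = f;
  tensm_unit_r : forall f, tensm f (idm unitK) = f;
  src_braid : forall A B, src (braid A B) = tens A B;
  tgt_braid : forall A B, tgt (braid A B) = tens B A;
  src_braid_inv : forall A B, src (braid_inv A B) = tens B A;
  tgt_braid_inv : forall A B, tgt (braid_inv A B) = tens A B;
  braid_inv_l : forall A B, comp (braid_inv A B) (braid A B) = idm (tens A B);
  braid_inv_r : forall A B, comp (braid A B) (braid_inv A B) = idm (tens B A);
  braid_nat : forall f g,
    comp (braid (tgt f) (tgt g)) (tensm f g) = comp (tensm g f) (braid (src f) (src g));
  braid_hex1 : forall A B C,
    braid A (tens B C) = comp (tensm (idm B) (braid A C)) (tensm (braid A B) (idm C));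
  braid_hex2 : forall A B C,
    braid (tens A B) C = comp (tensm (braid A C) (idm B)) (tensm (idm A) (braid B C));
  idem_split : forall A e, src e = A -> tgt e = A -> comp e e = e ->
    exists X i p, src i = X /\ tgt i = A /\ src p = A /\ tgt p = X /\
      comp p i = idm X /\ comp i p = e
}.

Arguments src {_} _.  Arguments tgt {_} _.  Arguments idm {_} _.
Arguments comp {_} _ _.  Arguments tens {_} _ _.  Arguments tensm {_} _ _.
Arguments unitK {_}.  Arguments braid {_} _ _.  Arguments braid_inv {_} _ _.

Declare Scope cat_scope.
Delimit Scope cat_scope with cat.
Notation "g ∘ f" := (comp g f) (at level 40, left associativity) : cat_scope.
Notation "f ⊗ g" := (tensm f g) (at level 35, right associativity) : cat_scope.
Notation "A ⊙ B" := (tens A B) (at level 34, right associativity) : cat_scope.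
Open Scope cat_scope.

Section Defs.
Variable Ct : SBMCat.
Local Notation Ob := (Obj Ct).
Local Notation M := (Mor Ct).
Local Notation K := (@unitK Ct).
Local Notation c := (@braid Ct).
Local Notation ci := (@braid_inv Ct).
Local Notation id := (@idm Ct).

Definition hom (f : M) (A B : Ob) : Prop := src f = A /\ tgt f = B.

Definition wedge (mu delta f g : M) : M := mu ∘ (f ⊗ g) ∘ delta.

Definition is_algebra (A : Ob) (eta mu : M) : Prop :=
  hom eta K A /\ hom mu (A ⊙ A) A /\
  mu ∘ (mu ⊗ id A) = mu ∘ (id A ⊗ mu) /\
  mu ∘ (eta ⊗ id A) = id A /\ mu ∘ (id A ⊗ eta) = id A.

Definition is_coalgebra (C : Ob) (eps delta : M) : Prop :=
  hom eps C K /\ hom delta C (C ⊙ C) /\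
  (delta ⊗ id C) ∘ delta = (id C ⊗ delta) ∘ delta /\
  (eps ⊗ id C) ∘ delta = id C /\ (id C ⊗ eps) ∘ delta = id C.

Definition is_alg_morphism (A : Ob) (etaA muA : M) (B : Ob) (etaB muB : M)
  (f : M) : Prop :=
  hom f A B /\ f ∘ etaA = etaB /\ f ∘ muA = muB ∘ (f ⊗ f).

Definition is_coalg_morphism (A : Ob) (epsA deltaA : M) (B : Ob) (epsB deltaB : M)
  (f : M) : Prop :=
  hom f A B /\ epsB ∘ f = epsA /\ deltaB ∘ f = (f ⊗ f) ∘ deltaA.

Definition is_weak_bialgebra (D : Ob) (eta mu eps delta : M) : Prop :=
  is_algebra D eta mu /\ is_coalgebra D eps delta /\
  delta ∘ mu = (mu ⊗ mu) ∘ (id D ⊗ c D D ⊗ id D) ∘ (delta ⊗ delta) /\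
  eps ∘ mu ∘ (mu ⊗ id D) =
    ((eps ∘ mu) ⊗ (eps ∘ mu)) ∘ (id D ⊗ delta ⊗ id D) /\
  eps ∘ mu ∘ (mu ⊗ id D) =
    ((eps ∘ mu) ⊗ (eps ∘ mu)) ∘ (id D ⊗ (ci D D ∘ delta) ⊗ id D) /\
  (delta ⊗ id D) ∘ delta ∘ eta =
    (id D ⊗ mu ⊗ id D) ∘ ((delta ∘ eta) ⊗ (delta ∘ eta)) /\
  (delta ⊗ id D) ∘ delta ∘ eta =
    (id D ⊗ (mu ∘ ci D D) ⊗ id D) ∘ ((delta ∘ eta) ⊗ (delta ∘ eta)).

Definition PiL (D : Ob) (eta mu eps delta : M) : M :=
  ((eps ∘ mu) ⊗ id D) ∘ (id D ⊗ c D D) ∘ ((delta ∘ eta) ⊗ id D).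

Definition PiR (D : Ob) (eta mu eps delta : M) : M :=
  (id D ⊗ (eps ∘ mu)) ∘ (c D D ⊗ id D) ∘ (id D ⊗ (delta ∘ eta)).

Definition is_weak_hopf (D : Ob) (eta mu eps delta lam : M) : Prop :=
  is_weak_bialgebra D eta mu eps delta /\ hom lam D D /\
  wedge mu delta (id D) lam = PiL D eta mu eps delta /\
  wedge mu delta lam (id D) = PiR D eta mu eps delta /\
  wedge mu delta (wedge mu delta lam (id D)) lam = lam.

Definition is_weak_projection (D : Ob) (etaD muD epsD deltaD : M)
  (B : Ob) (etaB muB epsB deltaB lamB : M) (f g : M) : Prop :=
  is_weak_bialgebra D etaD muD epsD deltaD /\
  is_weak_hopf B etaB muB epsB deltaB lamB /\
  is_alg_morphism B etaB muB D etaD muD f /\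
  is_coalg_morphism B epsB deltaB D epsD deltaD f /\
  is_coalg_morphism D epsD deltaD B epsB deltaB g /\
  g ∘ f = id B /\
  g ∘ muD ∘ (id D ⊗ f) = muB ∘ (g ⊗ id B).

Definition nabla (C A : Ob) (etaA muA psi : M) : M :=
  (id C ⊗ muA) ∘ ((psi ∘ (etaA ⊗ id C)) ⊗ id A).

Definition beta_nu (C A : Ob) (muA nu : M) : M := (id C ⊗ muA) ∘ (nu ⊗ id A).

Definition mu_CA (C A : Ob) (muA psi sigma : M) : M :=
  (id C ⊗ muA) ∘ (sigma ⊗ muA) ∘ (id C ⊗ psi ⊗ id A).

Definition is_weak_crossed_product (C A : Ob) (etaA muA psi sigma nu : M) : Prop :=
  hom psi (A ⊙ C) (C ⊙ A) /\ hom sigma (C ⊙ C) (C ⊙ A) /\ hom nu K (C ⊙ A) /\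
  (id C ⊗ muA) ∘ (psi ⊗ id A) ∘ (id A ⊗ psi) = psi ∘ (muA ⊗ id C) /\
  nabla C A etaA muA psi ∘ nabla C A etaA muA psi = nabla C A etaA muA psi /\
  nabla C A etaA muA psi ∘ sigma = sigma /\
  (id C ⊗ muA) ∘ (sigma ⊗ id A) ∘ (id C ⊗ psi) ∘ (psi ⊗ id C) =
    (id C ⊗ muA) ∘ (psi ⊗ id A) ∘ (id A ⊗ sigma) /\
  (id C ⊗ muA) ∘ (sigma ⊗ id A) ∘ (id C ⊗ sigma) =
    (id C ⊗ muA) ∘ (sigma ⊗ id A) ∘ (id C ⊗ psi) ∘ (sigma ⊗ id C) /\
  (id C ⊗ muA) ∘ (sigma ⊗ id A) ∘ (id C ⊗ psi) ∘ (nu ⊗ id C) =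
    nabla C A etaA muA psi ∘ (id C ⊗ etaA) /\
  (id C ⊗ muA) ∘ (sigma ⊗ id A) ∘ (id C ⊗ nu) =
    nabla C A etaA muA psi ∘ (id C ⊗ etaA) /\
  (id C ⊗ muA) ∘ (psi ⊗ id A) ∘ (id A ⊗ nu) = beta_nu C A muA nu.

Definition Gamma (C A : Ob) (epsC deltaC chi : M) : M :=
  (id C ⊗ id A ⊗ epsC) ∘ (id C ⊗ chi) ∘ (deltaC ⊗ id A).

Definition gamma_ups (C A : Ob) (deltaC ups : M) : M := (id C ⊗ ups) ∘ (deltaC ⊗ id A).

Definition delta_CA (C A : Ob) (deltaC chi tau : M) : M :=
  (id C ⊗ chi ⊗ id A) ∘ (deltaC ⊗ tau) ∘ (deltaC ⊗ id A).

Definition is_weak_crossed_coproduct (C A : Ob) (epsC deltaC chi tau ups : M) : Prop :=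
  hom chi (C ⊙ A) (A ⊙ C) /\ hom tau (C ⊙ A) (A ⊙ A) /\ hom ups (C ⊙ A) K /\
  (chi ⊗ id C) ∘ (id C ⊗ chi) ∘ (deltaC ⊗ id A) = (id A ⊗ deltaC) ∘ chi /\
  Gamma C A epsC deltaC chi ∘ Gamma C A epsC deltaC chi = Gamma C A epsC deltaC chi /\
  tau ∘ Gamma C A epsC deltaC chi = tau /\
  (tau ⊗ id C) ∘ (id C ⊗ chi) ∘ (deltaC ⊗ id A) =
    (id A ⊗ chi) ∘ (chi ⊗ id A) ∘ (id C ⊗ tau) ∘ (deltaC ⊗ id A) /\
  (tau ⊗ id A) ∘ (id C ⊗ tau) ∘ (deltaC ⊗ id A) =
    (id A ⊗ tau) ∘ (chi ⊗ id A) ∘ (id C ⊗ tau) ∘ (deltaC ⊗ id A) /\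
  (id A ⊗ ups) ∘ (chi ⊗ id A) ∘ (id C ⊗ tau) ∘ (deltaC ⊗ id A) =
    (epsC ⊗ id A) ∘ Gamma C A epsC deltaC chi /\
  (ups ⊗ id A) ∘ (id C ⊗ tau) ∘ (deltaC ⊗ id A) =
    (epsC ⊗ id A) ∘ Gamma C A epsC deltaC chi /\
  (ups ⊗ id C) ∘ (id C ⊗ chi) ∘ (deltaC ⊗ id A) = gamma_ups C A deltaC ups.

(* D is a weak crossed biproduct of the coalgebra C with the algebra A.
   C x A is realised through a splitting (X, i, p) of nabla = Gamma
   (any two splittings are canonically isomorphic). *)
Definition is_weak_crossed_biproduct
  (D : Ob) (etaD muD epsD deltaD : M)
  (C : Ob) (epsC deltaC : M) (A : Ob) (etaA muA : M)
  (psi sigma chi tau nu ups : M) : Prop :=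
  is_weak_bialgebra D etaD muD epsD deltaD /\
  is_coalgebra C epsC deltaC /\ is_algebra A etaA muA /\
  is_weak_crossed_product C A etaA muA psi sigma nu /\
  is_weak_crossed_coproduct C A epsC deltaC chi tau ups /\
  nabla C A etaA muA psi = Gamma C A epsC deltaC chi /\
  (exists (X : Ob) (i p w w' : M),
      hom i X (C ⊙ A) /\ hom p (C ⊙ A) X /\
      p ∘ i = id X /\ i ∘ p = nabla C A etaA muA psi /\
      hom w X D /\ hom w' D X /\ w' ∘ w = id X /\ w ∘ w' = id D /\
      is_alg_morphism X (p ∘ nu) (p ∘ mu_CA C A muA psi sigma ∘ (i ⊗ i))
                      D etaD muD w /\
      is_coalg_morphism X (ups ∘ i) ((p ⊗ p) ∘ delta_CA C A deltaC chi tau ∘ i)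
                        D epsD deltaD w) /\
  (epsC ⊗ id A) ∘ nu = etaA /\
  ups ∘ (id C ⊗ etaA) = epsC.

End Defs.

(* Let [(X, i, p)] split the idempotent [nabla = Gamma] on [C ⊗ B] and let [w : X -> D] be
   the algebra-coalgebra isomorphism; take [f = w ∘ p ∘ beta_nu] and
   [g = (epsC ⊗ B) ∘ i ∘ w^-1].  Because [nabla ∘ nu = nu], [nabla] fixes [beta_nu]; together
   with the right [B]-linearity of [beta_nu] this gives [mu_CA ∘ (beta_nu ⊗ beta_nu) =
   beta_nu ∘ muB], so [f] is multiplicative, and it is comultiplicative by hypothesis.
   The assumed shape of [tau] turns [((epsC ⊗ B) ∘ nabla)^{⊗2} ∘ delta_CA = tau] into the
   comultiplicativity of [g]; [g ∘ f = id] is [(epsC ⊗ B) ∘ nu = etaB], and the module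
   condition on [g] comes from [mu_CA ∘ (C ⊗ B ⊗ beta_nu) = (C ⊗ muB) ∘ (nabla ⊗ B)]. *)

From Stdlib Require Import Setoid.

Ltac rewrite_types :=
  repeat (first [ rewrite src_tensm | rewrite tgt_tensm | rewrite src_idm | rewrite tgt_idm
     | match goal with H : src ?x = _ |- context [src ?x] => rewrite H end
     | match goal with H : tgt ?x = _ |- context [tgt ?x] => rewrite H end
     | rewrite src_comp by typecheck | rewrite tgt_comp by typecheck ])
with typecheck :=
  rewrite_types; rewrite ?tens_assoc, ?tens_unit_l, ?tens_unit_r; reflexivity.

Section Calculus.
Context {Ct : SBMCat}.
Implicit Types f g h : Mor Ct.

Lemma comp_idm_r f A : src f = A -> f ∘ idm A = f.
Proof. intros <-; apply comp_id_r. Qed.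

Lemma comp_idm_l f A : tgt f = A -> idm A ∘ f = f.
Proof. intros <-; apply comp_id_l. Qed.

Lemma comp_assoc3 h f1 f2 f3 : tgt f3 = src f2 -> tgt f2 = src f1 -> tgt f1 = src h ->
  h ∘ f1 ∘ f2 ∘ f3 = h ∘ (f1 ∘ f2 ∘ f3).
Proof. intros; rewrite !comp_assoc; auto; typecheck. Qed.

Lemma comp_tensm f1 g1 f2 g2 : tgt f1 = src g1 -> tgt f2 = src g2 ->
  (g1 ⊗ g2) ∘ (f1 ⊗ f2) = (g1 ∘ f1) ⊗ (g2 ∘ f2).
Proof. intros; rewrite tensm_comp; auto. Qed.

Lemma comp_tensm3_l f1 g1 f2 g2 g3 :
  tgt f1 = src g1 ⊙ src g2 -> tgt f2 = src g3 ->
  (g1 ⊗ (g2 ⊗ g3)) ∘ (f1 ⊗ f2) = ((g1 ⊗ g2) ∘ f1) ⊗ (g3 ∘ f2).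
Proof. intros; rewrite <- tensm_assoc, tensm_comp; rewrite ?src_tensm; auto. Qed.

Lemma comp_tensm3_r f1 g1 f2 g2 f3 :
  tgt f1 ⊙ tgt f2 = src g1 -> tgt f3 = src g2 ->
  (g1 ⊗ g2) ∘ (f1 ⊗ (f2 ⊗ f3)) = (g1 ∘ (f1 ⊗ f2)) ⊗ (g2 ∘ f3).
Proof. intros; rewrite <- tensm_assoc, tensm_comp; rewrite ?tgt_tensm; auto. Qed.

Lemma tensm_sequential_l f g A B : tgt f = A -> src g = B ->
  f ⊗ g = (idm A ⊗ g) ∘ (f ⊗ idm B).
Proof. intros; rewrite comp_tensm, comp_idm_l, comp_idm_r; subst; auto; typecheck. Qed.

Lemma tensm_sequential_r f g A B : src f = A -> tgt g = B ->
  f ⊗ g = (f ⊗ idm B) ∘ (idm A ⊗ g).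
Proof. intros; rewrite comp_tensm, comp_idm_l, comp_idm_r; subst; auto; typecheck. Qed.

Lemma tensm_compl f g h : tgt f = src g -> (g ∘ f) ⊗ h = (g ⊗ h) ∘ (f ⊗ idm (src h)).
Proof. intros; rewrite comp_tensm, comp_idm_r; auto; typecheck. Qed.

Lemma tensm_compr h g f : tgt f = src g -> h ⊗ (g ∘ f) = (h ⊗ g) ∘ (idm (src h) ⊗ f).
Proof. intros; rewrite comp_tensm, comp_idm_r; auto; typecheck. Qed.

Lemma comp_points_r f g X : src f = unitK -> src g = unitK -> tgt f = X ->
  (idm X ⊗ g) ∘ f = f ⊗ g.
Proof.
  intros; rewrite <- (tensm_unit_r f) at 1.
  rewrite comp_tensm, comp_idm_l, comp_idm_r; auto; typecheck.
Qed.

Lemma comp_points_l f g Y : src f = unitK -> src g = unitK -> tgt g = Y ->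
  (f ⊗ idm Y) ∘ g = f ⊗ g.
Proof.
  intros; rewrite <- (tensm_unit_l g) at 1.
  rewrite comp_tensm, comp_idm_l, comp_idm_r; auto; typecheck.
Qed.

Lemma comp_point_tensm g1 g2 f : src g1 = unitK -> tgt f = src g2 ->
  (g1 ⊗ g2) ∘ f = g1 ⊗ (g2 ∘ f).
Proof.
  intros; rewrite <- (tensm_unit_l f) at 1.
  rewrite comp_tensm, comp_idm_r; auto; typecheck.
Qed.

Lemma tensm_copoint_l f g A : tgt f = unitK -> src g = A -> f ⊗ g = g ∘ (f ⊗ idm A).
Proof.
  intros; rewrite <- (tensm_unit_l g) at 2.
  rewrite comp_tensm, comp_idm_l, comp_idm_r; auto; typecheck.
Qed.

Lemma tensm_copoint_r f g A : tgt g = unitK -> src f = A -> f ⊗ g = f ∘ (idm A ⊗ g).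
Proof.
  intros; rewrite <- (tensm_unit_r f) at 2.
  rewrite comp_tensm, comp_idm_l, comp_idm_r; auto; typecheck.
Qed.

End Calculus.

Ltac merge_pair g1 g2 f1 f2 :=
  first [ rewrite (comp_tensm f1 g1 f2 g2) by typecheck
        | match g2 with ?g2a ⊗ ?g2b => rewrite (comp_tensm3_l f1 g1 f2 g2a g2b) by typecheck end
        | match f2 with ?f2a ⊗ ?f2b => rewrite (comp_tensm3_r f1 g1 f2a g2 f2b) by typecheck end ].

Ltac merge_any :=
  match goal with
  | |- context [(?h ∘ (?g1 ⊗ ?g2)) ∘ (?f1 ⊗ ?f2)] =>
      rewrite <- (@comp_assoc _ (f1 ⊗ f2) (g1 ⊗ g2) h) by typecheck; merge_pair g1 g2 f1 f2
  | |- context [(?g1 ⊗ ?g2) ∘ (?f1 ⊗ ?f2)] => merge_pair g1 g2 f1 f2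
  end.

Ltac drop_idm :=
  match goal with
  | |- context [idm ?A ∘ ?f] => rewrite (comp_idm_l f A) by typecheck
  | |- context [?f ∘ idm ?A] => rewrite (comp_idm_r f A) by typecheck
  end.

Ltac assoc_left := repeat (match goal with |- context [?h ∘ (?g ∘ ?f)] =>
    rewrite (@comp_assoc _ f g h) by typecheck end).

(* Normal form: composites associated to the left, tensor products to the right,
   identities of tensor objects split into tensor products of identities. *)
Ltac flatten :=
  rewrite_types; rewrite ?tens_assoc, ?tens_unit_l, ?tens_unit_r;
  rewrite <- ?tensm_idm; rewrite ?tensm_assoc, ?tensm_unit_l, ?tensm_unit_r; assoc_left.

Ltac simplify := repeat (flatten; rewrite ?tensm_idm; drop_idm); flatten.

Ltac simplify_merge :=
  repeat (flatten; first [ merge_any | rewrite ?tensm_idm; drop_idm ]); flatten.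

Ltac merge_tensm g f :=
  match g with ?g1 ⊗ ?g2 => match f with ?f1 ⊗ ?f2 => merge_pair g1 g2 f1 f2 end end.

Ltac merge_only g f :=
  first [ match goal with
          | |- context [(?h ∘ g) ∘ f] =>
              rewrite <- (@comp_assoc _ f g h) by typecheck; merge_tensm g f
          end
        | merge_tensm g f ].

Ltac merge g f := merge_only g f; simplify.

Ltac expand_tensm :=
  repeat (match goal with
          | |- context [?h ⊗ (?g ∘ ?f)] => rewrite (tensm_compr h g f) by typecheck
          | |- context [(?g ∘ ?f) ⊗ ?h] => rewrite (tensm_compl f g h) by typecheck
          end); simplify.

(* Rewrite with an equation between composites that occurs as a segment of a longer
   left-associated composite. *)
Ltac rewrite_chain H :=
  (match type of H with
   | ?a ∘ ?b ∘ ?c = _ =>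
       first [ rewrite H
             | match goal with |- context [?h ∘ a ∘ b ∘ c] =>
                 rewrite (comp_assoc3 h a b c) by typecheck; rewrite H end ]
   | ?a ∘ ?b = _ =>
       first [ rewrite H
             | match goal with |- context [?h ∘ a ∘ b] =>
                 rewrite <- (@comp_assoc _ b a h) by typecheck; rewrite H end ]
   end); simplify.

Section WeakCrossedProduct.
Variable Ct : SBMCat.
Variables C A : Obj Ct.
Variables etaA muA psi sigma nu : Mor Ct.
Hypothesis src_etaA : src etaA = unitK. Hypothesis tgt_etaA : tgt etaA = A.
Hypothesis src_muA : src muA = A ⊙ A. Hypothesis tgt_muA : tgt muA = A.
Hypothesis src_psi : src psi = A ⊙ C. Hypothesis tgt_psi : tgt psi = C ⊙ A.
Hypothesis src_sigma : src sigma = C ⊙ C. Hypothesis tgt_sigma : tgt sigma = C ⊙ A.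
Hypothesis src_nu : src nu = unitK. Hypothesis tgt_nu : tgt nu = C ⊙ A.
Hypothesis mulA_assoc : muA ∘ (muA ⊗ idm A) = muA ∘ (idm A ⊗ muA).
Hypothesis mulA_unit_l : muA ∘ (etaA ⊗ idm A) = idm A.
Hypothesis mulA_unit_r : muA ∘ (idm A ⊗ etaA) = idm A.
Hypothesis psi_nu : (idm C ⊗ muA) ∘ (psi ⊗ idm A) ∘ (idm A ⊗ nu) = beta_nu C A muA nu.
Hypothesis sigma_nu :
  (idm C ⊗ muA) ∘ (sigma ⊗ idm A) ∘ (idm C ⊗ nu) = nabla C A etaA muA psi ∘ (idm C ⊗ etaA).

Local Notation nab := (nabla C A etaA muA psi).
Local Notation beta := (beta_nu C A muA nu).
Local Notation muCA := (mu_CA C A muA psi sigma).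

Lemma src_nabla : src nab = C ⊙ A. Proof. unfold nabla; typecheck. Qed.
Lemma tgt_nabla : tgt nab = C ⊙ A. Proof. unfold nabla; typecheck. Qed.
Lemma src_beta_nu : src beta = A. Proof. unfold beta_nu; typecheck. Qed.
Lemma tgt_beta_nu : tgt beta = C ⊙ A. Proof. unfold beta_nu; typecheck. Qed.
Lemma src_mu_CA : src muCA = C ⊙ A ⊙ C ⊙ A. Proof. unfold mu_CA; typecheck. Qed.
Lemma tgt_mu_CA : tgt muCA = C ⊙ A. Proof. unfold mu_CA; typecheck. Qed.

Lemma nabla_mul_r : nab ∘ (idm C ⊗ muA) = (idm C ⊗ muA) ∘ (nab ⊗ idm A).
Proof.
  unfold nabla. set (X := psi ∘ (etaA ⊗ idm C)).
  assert (src X = C) by (unfold X; typecheck). assert (tgt X = C ⊙ A) by (unfold X; typecheck).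
  rewrite (tensm_compl (X ⊗ idm A) (idm C ⊗ muA) (idm A)) by typecheck. simplify_merge.
  rewrite mulA_assoc, (tensm_compr (idm C) muA (idm A ⊗ muA)) by typecheck.
  simplify_merge. reflexivity.
Qed.

(* Evaluate [psi_nu] at the unit of [A]. *)
Lemma nabla_nu : nab ∘ nu = nu.
Proof.
  assert (H := f_equal (fun m => m ∘ etaA) psi_nu). simpl in H. unfold beta_nu in H.
  rewrite <- (@comp_assoc _ etaA) in H by typecheck.
  rewrite (comp_points_r etaA nu A), <- (comp_points_l etaA nu (C ⊙ A)) in H by typecheck.
  rewrite <- (@comp_assoc _ etaA) in H by typecheck.
  rewrite (comp_points_l nu etaA A), <- (comp_points_r nu etaA (C ⊙ A)) in H by typecheck.
  unfold nabla. revert H. simplify_merge. rewrite mulA_unit_r. simplify_merge. auto.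
Qed.

Lemma mu_CA_nu : muCA ∘ (idm C ⊗ idm A ⊗ nu) = nab.
Proof.
  pose proof src_nabla; pose proof tgt_nabla.
  unfold mu_CA. simplify.
  rewrite (tensm_sequential_r sigma muA (C ⊙ C) A) by typecheck. simplify.
  merge (idm C ⊗ psi ⊗ idm A) (idm C ⊗ idm A ⊗ nu).
  merge (idm C ⊗ idm C ⊗ muA) (idm C ⊗ (psi ⊗ idm A ∘ idm A ⊗ nu)).
  rewrite psi_nu. unfold beta_nu.
  rewrite (tensm_compr (idm C) (idm C ⊗ muA) (nu ⊗ idm A)) by typecheck. simplify.
  merge (sigma ⊗ idm A) (idm C ⊗ idm C ⊗ muA).
  rewrite (tensm_sequential_l sigma muA (C ⊙ A) (A ⊙ A)) by typecheck. simplify.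
  merge (idm C ⊗ muA) (idm C ⊗ idm A ⊗ muA).
  rewrite <- mulA_assoc, (tensm_compr (idm C) muA (muA ⊗ idm A)) by typecheck. simplify.
  rewrite <- (tensm_assoc (idm C) muA (idm A)), <- (tensm_assoc sigma (idm A) (idm A)),
    <- (tensm_assoc (idm C) nu (idm A)).
  merge_only ((sigma ⊗ idm A) ⊗ idm A) ((idm C ⊗ nu) ⊗ idm A).
  merge_only ((idm C ⊗ muA) ⊗ idm A) ((sigma ⊗ idm A ∘ idm C ⊗ nu) ⊗ (idm A ∘ idm A)).
  rewrite (@comp_assoc _ (idm C ⊗ nu) (sigma ⊗ idm A) (idm C ⊗ muA)) by typecheck.
  rewrite sigma_nu.
  rewrite (tensm_compl (idm C ⊗ etaA) nab (idm A ∘ (idm A ∘ idm A))) by typecheck. simplify.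
  rewrite <- nabla_mul_r. simplify.
  merge (idm C ⊗ muA) (idm C ⊗ etaA ⊗ idm A). rewrite mulA_unit_l. simplify. reflexivity.
Qed.

Lemma mu_CA_mul_r :
  muCA ∘ (idm C ⊗ idm A ⊗ idm C ⊗ muA) = (idm C ⊗ muA) ∘ (muCA ⊗ idm A).
Proof.
  unfold mu_CA. expand_tensm.
  merge (idm C ⊗ psi ⊗ idm A) (idm C ⊗ idm A ⊗ idm C ⊗ muA).
  merge (psi ⊗ idm A) (idm A ⊗ idm C ⊗ muA).
  rewrite (tensm_sequential_l psi muA (C ⊙ A) (A ⊙ A)) by typecheck. expand_tensm.
  merge (sigma ⊗ muA) (idm C ⊗ idm C ⊗ idm A ⊗ muA).
  rewrite <- mulA_assoc.
  rewrite (tensm_sequential_l sigma (muA ∘ muA ⊗ idm A) (C ⊙ A) (A ⊙ A ⊙ A)) by typecheck.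
  simplify.
  merge (idm C ⊗ muA) (idm C ⊗ idm A ⊗ (muA ∘ muA ⊗ idm A)).
  rewrite (tensm_sequential_l sigma (muA ⊗ idm A) (C ⊙ A) (A ⊙ A ⊙ A)) by typecheck. simplify.
  merge (idm C ⊗ muA ⊗ idm A) (idm C ⊗ idm A ⊗ muA ⊗ idm A).
  merge (idm C ⊗ muA) (idm C ⊗ (muA ⊗ idm A ∘ idm A ⊗ muA ⊗ idm A)).
  rewrite (tensm_compr (idm A) muA (muA ⊗ idm A)) by typecheck. simplify.
  rewrite <- mulA_assoc. reflexivity.
Qed.

Lemma mu_CA_beta_r : muCA ∘ (idm C ⊗ idm A ⊗ beta) = (idm C ⊗ muA) ∘ (nab ⊗ idm A).
Proof.
  pose proof src_mu_CA; pose proof tgt_mu_CA; pose proof src_nabla; pose proof tgt_nabla.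
  unfold beta_nu. expand_tensm. rewrite mu_CA_mul_r.
  rewrite <- (tensm_assoc (idm A) nu (idm A)), <- (tensm_assoc (idm C) (idm A ⊗ nu) (idm A)).
  rewrite <- (@comp_assoc _ _ (muCA ⊗ idm A)) by typecheck.
  rewrite comp_tensm by typecheck. rewrite mu_CA_nu. simplify. reflexivity.
Qed.

Lemma nabla_beta : nab ∘ beta = beta.
Proof.
  pose proof src_nabla; pose proof tgt_nabla.
  unfold beta_nu. simplify. rewrite nabla_mul_r.
  rewrite <- (@comp_assoc _ _ (nab ⊗ idm A)) by typecheck.
  rewrite comp_tensm by typecheck. rewrite nabla_nu. simplify. reflexivity.
Qed.

Lemma mu_CA_beta : muCA ∘ (beta ⊗ beta) = beta ∘ muA.
Proof.
  pose proof src_mu_CA; pose proof tgt_mu_CA; pose proof src_nabla; pose proof tgt_nabla;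
    pose proof src_beta_nu; pose proof tgt_beta_nu.
  rewrite (tensm_sequential_l beta beta (C ⊙ A) A) by typecheck. simplify.
  rewrite mu_CA_beta_r, <- (@comp_assoc _ _ (nab ⊗ idm A)) by typecheck.
  rewrite comp_tensm by typecheck. rewrite nabla_beta. simplify.
  unfold beta_nu. expand_tensm. merge (idm C ⊗ muA) (idm C ⊗ muA ⊗ idm A).
  rewrite mulA_assoc, <- (@comp_assoc _ muA (nu ⊗ idm A)) by typecheck.
  rewrite (comp_point_tensm nu (idm A) muA) by typecheck. simplify.
  rewrite (tensm_sequential_l nu muA (C ⊙ A) (A ⊙ A)) by typecheck. simplify.
  merge (idm C ⊗ muA) (idm C ⊗ idm A ⊗ muA). reflexivity.
Qed.

Lemma beta_nu_unit : beta ∘ etaA = nu.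
Proof.
  unfold beta_nu. rewrite <- (@comp_assoc _ etaA (nu ⊗ idm A)) by typecheck.
  rewrite (comp_point_tensm nu (idm A) etaA) by typecheck. simplify.
  rewrite <- (comp_points_r nu etaA (C ⊙ A)) by typecheck. simplify.
  merge (idm C ⊗ muA) (idm C ⊗ idm A ⊗ etaA). rewrite mulA_unit_r. simplify. reflexivity.
Qed.

Variable epsC : Mor Ct.
Hypothesis src_epsC : src epsC = C. Hypothesis tgt_epsC : tgt epsC = unitK.
Hypothesis counit_nu : (epsC ⊗ idm A) ∘ nu = etaA.

Lemma counit_beta_nu : (epsC ⊗ idm A) ∘ beta = idm A.
Proof.
  unfold beta_nu. simplify. merge (epsC ⊗ idm A) (idm C ⊗ muA).
  rewrite (tensm_copoint_l epsC muA (A ⊙ A)) by typecheck. simplify.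
  merge (epsC ⊗ idm A ⊗ idm A) (nu ⊗ idm A). rewrite counit_nu, mulA_unit_l. reflexivity.
Qed.

End WeakCrossedProduct.

Section WeakCrossedCoproduct.
Variable Ct : SBMCat.
Variables C A : Obj Ct.
Variables epsC deltaC chi tau : Mor Ct.
Hypothesis src_epsC : src epsC = C. Hypothesis tgt_epsC : tgt epsC = unitK.
Hypothesis src_deltaC : src deltaC = C. Hypothesis tgt_deltaC : tgt deltaC = C ⊙ C.
Hypothesis src_chi : src chi = C ⊙ A. Hypothesis tgt_chi : tgt chi = A ⊙ C.
Hypothesis src_tau : src tau = C ⊙ A. Hypothesis tgt_tau : tgt tau = A ⊙ A.
Hypothesis comulC_counit_l : (epsC ⊗ idm C) ∘ deltaC = idm C.
Hypothesis chi_comul :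
  (chi ⊗ idm C) ∘ (idm C ⊗ chi) ∘ (deltaC ⊗ idm A) = (idm A ⊗ deltaC) ∘ chi.
Hypothesis tau_Gamma : tau ∘ Gamma C A epsC deltaC chi = tau.
Hypothesis tau_twisted : (tau ⊗ idm C) ∘ (idm C ⊗ chi) ∘ (deltaC ⊗ idm A) =
  (idm A ⊗ chi) ∘ (chi ⊗ idm A) ∘ (idm C ⊗ tau) ∘ (deltaC ⊗ idm A).

Local Notation Gam := (Gamma C A epsC deltaC chi).

Lemma src_delta_CA : src (delta_CA C A deltaC chi tau) = C ⊙ A.
Proof. unfold delta_CA; typecheck. Qed.
Lemma tgt_delta_CA : tgt (delta_CA C A deltaC chi tau) = C ⊙ A ⊙ C ⊙ A.
Proof. unfold delta_CA; typecheck. Qed.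

Lemma counit_Gamma : (epsC ⊗ idm A) ∘ Gam = (idm A ⊗ epsC) ∘ chi.
Proof.
  unfold Gamma. simplify.
  merge (epsC ⊗ idm A) (idm C ⊗ idm A ⊗ epsC).
  merge (epsC ⊗ idm A ⊗ epsC) (idm C ⊗ chi).
  rewrite (tensm_copoint_l epsC (idm A ⊗ epsC ∘ chi) (C ⊙ A)) by typecheck. simplify.
  merge (epsC ⊗ idm C ⊗ idm A) (deltaC ⊗ idm A). rewrite comulC_counit_l. simplify.
  reflexivity.
Qed.

(* Apply the counit of [C] to the last factor of [tau_twisted]. *)
Lemma tau_expand :
  tau = (idm A ⊗ ((idm A ⊗ epsC) ∘ chi)) ∘ (chi ⊗ idm A) ∘ (idm C ⊗ tau) ∘ (deltaC ⊗ idm A).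
Proof.
  assert (H := f_equal (fun m => (idm A ⊗ idm A ⊗ epsC) ∘ m) tau_twisted). simpl in H.
  revert H. simplify.
  merge (idm A ⊗ idm A ⊗ epsC) (tau ⊗ idm C). merge (idm A ⊗ idm A ⊗ epsC) (idm A ⊗ chi).
  rewrite (tensm_copoint_r tau epsC (C ⊙ A)) by typecheck. simplify.
  intro H. rewrite <- H. rewrite <- tau_Gamma at 1. unfold Gamma. simplify. reflexivity.
Qed.

Lemma counit_Gamma_delta_CA :
  (((epsC ⊗ idm A) ∘ Gam) ⊗ ((epsC ⊗ idm A) ∘ Gam)) ∘ delta_CA C A deltaC chi tau = tau.
Proof.
  rewrite counit_Gamma. rewrite tau_expand at 2. unfold delta_CA.
  set (E := (idm A ⊗ epsC) ∘ chi).
  assert (src E = C ⊙ A) by (unfold E; typecheck). assert (tgt E = A) by (unfold E; typecheck).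
  rewrite (tensm_sequential_l E E A (C ⊙ A)) by typecheck.
  rewrite (tensm_sequential_r deltaC tau C (A ⊙ A)) by typecheck. simplify.
  assert (E_chi : (E ⊗ idm C) ∘ (idm C ⊗ chi) ∘ (deltaC ⊗ idm A) = chi).
  { unfold E. rewrite (tensm_compl chi (idm A ⊗ epsC) (idm C)) by typecheck. simplify.
    rewrite_chain chi_comul.
    merge (idm A ⊗ epsC ⊗ idm C) (idm A ⊗ deltaC). rewrite comulC_counit_l. simplify.
    reflexivity. }
  rewrite <- (tensm_assoc E (idm C) (idm A)), <- (tensm_assoc (idm C) chi (idm A)),
     <- (tensm_assoc deltaC (idm A) (idm A)).
  merge_only ((E ⊗ idm C) ⊗ idm A) ((idm C ⊗ chi) ⊗ idm A).
  merge_only ((E ⊗ idm C ∘ idm C ⊗ chi) ⊗ (idm A ∘ idm A)) ((deltaC ⊗ idm A) ⊗ idm A).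
  rewrite E_chi. simplify. reflexivity.
Qed.

End WeakCrossedCoproduct.

(* Abstract form of the data of a weak crossed biproduct: [nab], [muCA], [deltaCA] and
   [beta] stand for the idempotent, the product, the coproduct and [beta_nu]; [(X, i, p)]
   splits [nab] and [w : X -> D] is an isomorphism with inverse [w']. *)
Section ProjectionFromSplitting.
Variable Ct : SBMCat.
Variables C B D X : Obj Ct.
Variables etaB muB epsB deltaB lamB epsC nu ups tau beta nab muCA deltaCA : Mor Ct.
Variables i p w w' etaD muD epsD deltaD : Mor Ct.
Hypothesis tgt_etaB : tgt etaB = B.
Hypothesis src_muB : src muB = B ⊙ B. Hypothesis tgt_muB : tgt muB = B.
Hypothesis src_epsB : src epsB = B.
Hypothesis src_deltaB : src deltaB = B. Hypothesis tgt_deltaB : tgt deltaB = B ⊙ B.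
Hypothesis src_epsC : src epsC = C. Hypothesis tgt_epsC : tgt epsC = unitK.
Hypothesis tgt_nu : tgt nu = C ⊙ B.
Hypothesis src_ups : src ups = C ⊙ B.
Hypothesis src_beta : src beta = B. Hypothesis tgt_beta : tgt beta = C ⊙ B.
Hypothesis src_nab : src nab = C ⊙ B. Hypothesis tgt_nab : tgt nab = C ⊙ B.
Hypothesis src_muCA : src muCA = C ⊙ B ⊙ C ⊙ B. Hypothesis tgt_muCA : tgt muCA = C ⊙ B.
Hypothesis src_deltaCA : src deltaCA = C ⊙ B.
Hypothesis tgt_deltaCA : tgt deltaCA = C ⊙ B ⊙ C ⊙ B.
Hypothesis src_i : src i = X. Hypothesis tgt_i : tgt i = C ⊙ B.
Hypothesis src_p : src p = C ⊙ B. Hypothesis tgt_p : tgt p = X.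
Hypothesis src_w : src w = X. Hypothesis tgt_w : tgt w = D.
Hypothesis src_w' : src w' = D. Hypothesis tgt_w' : tgt w' = X.
Hypothesis src_muD : src muD = D ⊙ D.
Hypothesis src_epsD : src epsD = D.
Hypothesis src_deltaD : src deltaD = D.
Hypothesis p_i : p ∘ i = idm X.
Hypothesis i_p : i ∘ p = nab.
Hypothesis w'_w : w' ∘ w = idm X.
Hypothesis w_w' : w ∘ w' = idm D.
Hypothesis w_unit : w ∘ (p ∘ nu) = etaD.
Hypothesis w_mul : w ∘ (p ∘ muCA ∘ (i ⊗ i)) = muD ∘ (w ⊗ w).
Hypothesis w_counit : epsD ∘ w = ups ∘ i.
Hypothesis w_comul : deltaD ∘ w = (w ⊗ w) ∘ ((p ⊗ p) ∘ deltaCA ∘ i).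
Hypothesis ups_def : ups = (epsC ⊗ epsB) ∘ nab.
Hypothesis tau_def : tau = (epsC ⊗ deltaB) ∘ nab.
Hypothesis deltaCA_beta : deltaCA ∘ beta = (beta ⊗ beta) ∘ deltaB.
Hypothesis nab_mul_r : nab ∘ (idm C ⊗ muB) = (idm C ⊗ muB) ∘ (nab ⊗ idm B).
Hypothesis muCA_beta_r : muCA ∘ (idm C ⊗ idm B ⊗ beta) = (idm C ⊗ muB) ∘ (nab ⊗ idm B).
Hypothesis muCA_beta : muCA ∘ (beta ⊗ beta) = beta ∘ muB.
Hypothesis nab_beta : nab ∘ beta = beta.
Hypothesis beta_unit : beta ∘ etaB = nu.
Hypothesis counit_beta : (epsC ⊗ idm B) ∘ beta = idm B.
Hypothesis counit_nab_deltaCA :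
  (((epsC ⊗ idm B) ∘ nab) ⊗ ((epsC ⊗ idm B) ∘ nab)) ∘ deltaCA = tau.

Local Notation f := (w ∘ p ∘ beta).
Local Notation g := ((epsC ⊗ idm B) ∘ i ∘ w').

Lemma nab_i : nab ∘ i = i.
Proof. rewrite <- i_p, <- comp_assoc, p_i by typecheck. simplify. reflexivity. Qed.

Lemma f_unit : f ∘ etaB = etaD.
Proof. simplify. rewrite_chain beta_unit. rewrite <- w_unit. simplify. reflexivity. Qed.

Lemma f_mul : f ∘ muB = muD ∘ (f ⊗ f).
Proof.
  assert (w_mul' : muD ∘ (w ⊗ w) = w ∘ p ∘ muCA ∘ (i ⊗ i))
    by (rewrite <- w_mul; simplify; reflexivity).
  rewrite <- (comp_tensm beta (w ∘ p) beta (w ∘ p)), <- (comp_tensm p w p w) by typecheck.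
  simplify. rewrite_chain w_mul'.
  merge (i ⊗ i) (p ⊗ p). rewrite i_p. merge (nab ⊗ nab) (beta ⊗ beta).
  rewrite nab_beta. rewrite_chain muCA_beta. reflexivity.
Qed.

Lemma f_counit : epsD ∘ f = epsB.
Proof.
  simplify. rewrite_chain w_counit. rewrite_chain i_p. rewrite_chain nab_beta.
  rewrite ups_def. simplify. rewrite_chain nab_beta.
  rewrite (tensm_copoint_l epsC epsB B) by typecheck. simplify.
  rewrite_chain counit_beta. reflexivity.
Qed.

Lemma f_comul : deltaD ∘ f = (f ⊗ f) ∘ deltaB.
Proof.
  simplify. rewrite_chain w_comul. rewrite_chain i_p. rewrite_chain nab_beta.
  rewrite_chain deltaCA_beta.
  rewrite <- (comp_tensm beta (w ∘ p) beta (w ∘ p)), <- (comp_tensm p w p w) by typecheck.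
  simplify. reflexivity.
Qed.

Lemma g_counit : epsB ∘ g = epsD.
Proof.
  rewrite <- (comp_idm_r epsD D), <- w_w' by typecheck. simplify.
  rewrite_chain w_counit. rewrite ups_def. simplify. rewrite_chain nab_i.
  rewrite <- (tensm_copoint_l epsC epsB B) by typecheck. reflexivity.
Qed.

Lemma g_comul : deltaB ∘ g = (g ⊗ g) ∘ deltaD.
Proof.
  rewrite <- (comp_idm_r deltaD D), <- w_w' by typecheck. simplify.
  rewrite_chain w_comul. merge (g ⊗ g) (w ⊗ w). rewrite_chain w'_w.
  merge (((epsC ⊗ idm B) ∘ i) ⊗ ((epsC ⊗ idm B) ∘ i)) (p ⊗ p).
  rewrite_chain i_p. rewrite counit_nab_deltaCA, tau_def. simplify. rewrite_chain nab_i.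
  rewrite (tensm_copoint_l epsC deltaB B) by typecheck. simplify. reflexivity.
Qed.

Lemma g_f : g ∘ f = idm B.
Proof. simplify. rewrite_chain w'_w. rewrite_chain i_p. rewrite_chain nab_beta. exact counit_beta. Qed.

(* [muD] transported to [C ⊗ B] is [muCA]; then [muCA_beta_r] does the work. *)
Lemma g_mul_f : g ∘ muD ∘ (idm D ⊗ f) = muB ∘ (g ⊗ idm B).
Proof.
  assert (muD_def : muD = w ∘ (p ∘ muCA ∘ (i ⊗ i)) ∘ (w' ⊗ w')).
  { rewrite w_mul, <- (@comp_assoc _ (w' ⊗ w')), comp_tensm, w_w' by typecheck.
    simplify. reflexivity. }
  rewrite muD_def. simplify. rewrite_chain w'_w. rewrite_chain i_p.
  merge (i ⊗ i) (w' ⊗ w'). merge ((i ∘ w') ⊗ (i ∘ w')) (idm D ⊗ f).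
  rewrite_chain w'_w. rewrite_chain i_p. rewrite_chain nab_beta.
  rewrite (tensm_sequential_l (i ∘ w') beta (C ⊙ B) B) by typecheck. simplify.
  rewrite_chain muCA_beta_r. rewrite_chain nab_mul_r.
  merge (nab ⊗ idm B) ((i ∘ w') ⊗ idm B). merge (nab ⊗ idm B) ((nab ∘ i ∘ w') ⊗ idm B).
  rewrite_chain nab_i. rewrite_chain nab_i.
  merge (epsC ⊗ idm B) (idm C ⊗ muB).
  rewrite (tensm_copoint_l epsC muB (B ⊙ B)) by typecheck. simplify.
  merge (epsC ⊗ idm B ⊗ idm B) ((i ∘ w') ⊗ idm B). reflexivity.
Qed.

Lemma splitting_weak_projection :
  is_weak_bialgebra D etaD muD epsD deltaD -> is_weak_hopf B etaB muB epsB deltaB lamB ->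
  is_weak_projection D etaD muD epsD deltaD B etaB muB epsB deltaB lamB f g.
Proof.
  intros HD HB. unfold is_weak_projection, is_alg_morphism, is_coalg_morphism, hom.
  split; [exact HD |]. split; [exact HB |].
  repeat split; try typecheck;
    auto using f_unit, f_mul, f_counit, f_comul, g_counit, g_comul, g_f, g_mul_f.
Qed.

End ProjectionFromSplitting.

Theorem theorem3p12 (Ct : SBMCat) (D C B : Obj Ct)
  (etaD muD epsD deltaD : Mor Ct)
  (epsC deltaC : Mor Ct)
  (etaB muB epsB deltaB lamB : Mor Ct)
  (psi sigma chi tau nu ups : Mor Ct) :
  is_weak_bialgebra D etaD muD epsD deltaD ->
  is_coalgebra C epsC deltaC ->
  is_weak_hopf B etaB muB epsB deltaB lamB ->
  is_weak_crossed_biproduct D etaD muD epsD deltaD C epsC deltaC B etaB muB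
    psi sigma chi tau nu ups ->
  delta_CA C B deltaC chi tau ∘ beta_nu C B muB nu =
    (beta_nu C B muB nu ⊗ beta_nu C B muB nu) ∘ deltaB ->
  tau = (epsC ⊗ deltaB) ∘ nabla C B etaB muB psi ->
  ups = (epsC ⊗ epsB) ∘ nabla C B etaB muB psi ->
  exists f g : Mor Ct,
    is_weak_projection D etaD muD epsD deltaD B etaB muB epsB deltaB lamB f g.
Proof.
  intros HD HC HB HX deltaCA_beta tau_def ups_def.
  pose proof HB as [[[[? ?] [[? ?] [? [? ?]]]] [[[? ?] [[? ?] _]] _]] _].
  destruct HC as [[? ?] [[? ?] [_ [comulC_counit_l _]]]].
  destruct HX as (_ & _ & _ & HP & HQ & nabla_Gamma & split & counit_nu & _).
  destruct HP as ([? ?] & [? ?] & [? ?] & _ & _ & _ & _ & _ & _ & sigma_nu & psi_nu).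
  destruct HQ as ([? ?] & [? ?] & [? ?] & chi_comul & _ & tau_Gamma & tau_twisted & _).
  destruct split as (X & i & p & w & w' & [? ?] & [? ?] & p_i & i_p & [? ?] & [? ?] &
    w'_w & w_w' & [_ [w_unit w_mul]] & [_ [w_counit w_comul]]).
  pose proof HD as [[[? ?] [[? ?] _]] [[[? ?] [[? ?] _]] _]].
  exists (w ∘ p ∘ beta_nu C B muB nu), ((epsC ⊗ idm B) ∘ i ∘ w').
  eapply splitting_weak_projection with (nu := nu) (ups := ups) (tau := tau)
    (nab := nabla C B etaB muB psi) (muCA := mu_CA C B muB psi sigma)
    (deltaCA := delta_CA C B deltaC chi tau);
    eauto using src_nabla, tgt_nabla, src_beta_nu, tgt_beta_nu, src_mu_CA, tgt_mu_CA,
      src_delta_CA, tgt_delta_CA, nabla_mul_r, mu_CA_beta_r, mu_CA_beta, nabla_beta,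
      beta_nu_unit, counit_beta_nu.
  rewrite nabla_Gamma; eapply counit_Gamma_delta_CA; eauto.
Qed.
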